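(* Let $(Q,\cdot)$ be a quasigroup satisfying $x(y(yz))=(x(yy))z$ for all $x,y,z\in Q$ (an LC4-quasigroup). Then $Q$ satisfies $x(x(yz))=(x(xy))z$ for all $x,y,z\in Q$ (i.e. $Q$ is an LC2-quasigroup).
   Context: A quasigroup is a set $Q$ with a binary operation $\cdot$ (written as juxtaposition) such that for all $a,b\in Q$ each of the equations $ax=b$ and $ya=b$ has a unique solution in $Q$. *)

Definition is_quasigroup {Q : Type} (mul : Q -> Q -> Q) : Prop :=
  (forall a b : Q, exists x : Q, mul a x = b /\ forall x', mul a x' = b -> x' = x) /\
  (forall a b : Q, exists y : Q, mul y a = b /\ forall y', mul y' a = b -> y' = y).

Definition LC4 {Q : Type} (mul : Q -> Q -> Q) : Prop :=
  forall x y z : Q, mul x (mul y (mul y z)) = mul (mul x (mul y y)) z.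

Definition LC2 {Q : Type} (mul : Q -> Q -> Q) : Prop :=
  forall x y z : Q, mul x (mul x (mul y z)) = mul (mul x (mul x y)) z.


(* Write L_a for left multiplication by a, so that LC4 reads
   L_x L_y L_y = L_(x(yy)).  It yields a right identity e and, for every u, an
   element u' with L_u' L_u = id.  For w = u(yy), choose r with r(yy) = u'(ww);
   then LC4 gives L_u' L_w L_w = L_r L_y L_y, i.e.
   (L_y L_y L_u) L_y L_y = L_r L_y L_y, and since L_y L_y is onto,
   L_y L_y L_u = L_r.  Evaluating at e gives r = y(yu), which is LC2. *)

Section DivisibleLC4.

Variables (Q : Type) (mul : Q -> Q -> Q).

Hypothesis ldiv : forall a b : Q, exists x, mul a x = b.
Hypothesis rdiv : forall a b : Q, exists y, mul y a = b.
Hypothesis lc4 : LC4 mul.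

Lemma LC4_right_identity (y e : Q) : mul y e = y -> forall a, mul a e = a.
Proof.
  intros He a.
  destruct (rdiv (mul y y) a) as [x <-].
  rewrite <- lc4, He.
  reflexivity.
Qed.

Lemma LC4_left_inverse (u : Q) : exists u', forall v, mul u' (mul u v) = v.
Proof.
  destruct (rdiv (mul u u) u) as [u' Hu'].
  exists u'; intro v.
  destruct (ldiv u v) as [q <-].
  rewrite lc4, Hu'.
  reflexivity.
Qed.

Lemma LC4_left_translation (y u : Q) :
  exists r, forall z, mul y (mul y (mul u z)) = mul r z.
Proof.
  destruct (LC4_left_inverse u) as [u' Hu'].
  set (w := mul u (mul y y)).
  destruct (rdiv (mul y y) (mul u' (mul w w))) as [r Hr].
  exists r; intro z.
  destruct (ldiv y z) as [p1 <-].
  destruct (ldiv y p1) as [p <-].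
  assert (Hw : forall t, mul w t = mul u (mul y (mul y t)))
    by (intro t; apply eq_sym, lc4).
  rewrite <- (Hu' (mul y (mul y (mul u (mul y (mul y p)))))).
  rewrite <- 2!Hw, lc4, <- Hr, <- lc4.
  reflexivity.
Qed.

Lemma LC4_LC2 : LC2 mul.
Proof.
  intros y u z.
  destruct (LC4_left_translation y u) as [r Hr].
  destruct (ldiv y y) as [e He].
  assert (Er : r = mul y (mul y u)).
  { rewrite <- (LC4_right_identity y e He r), <- Hr, (LC4_right_identity y e He).
    reflexivity. }
  rewrite Hr, Er.
  reflexivity.
Qed.

End DivisibleLC4.

Theorem mainTheorem8 (Q : Type) (mul : Q -> Q -> Q) :
  is_quasigroup mul -> LC4 mul -> LC2 mul.
Proof.
  intros [Hl Hr] H4.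
  apply LC4_LC2; trivial.
  - intros a b; destruct (Hl a b) as [x [Hx _]]; eauto.
  - intros a b; destruct (Hr a b) as [y [Hy _]]; eauto.
Qed.
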